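(* Let $R$ be a commutative ring with identity. If $\gamma_t(\Gamma(R)) \geq 3$, then the girth of $\Gamma(R)$ is $3$.
   Context: All rings are commutative with identity. The zero-divisor graph $\Gamma(R)$ has vertex set $Z(R)^*$ (nonzero zero-divisors); distinct $r,s$ are adjacent iff $rs=0$, and $x$ is adjacent to itself iff $x^2=0$. A total dominating set is $X\subseteq Z(R)^*$ such that every vertex is adjacent to some element of $X$ (self-adjacency counts); $\gamma_t$ is its minimum cardinality. The girth is the length of a shortest cycle through distinct vertices (loops not counted), and is $\infty$ if there is no cycle. *)

From mathcomp Require Import all_boot all_order all_algebra.
Set Implicit Arguments. Unset Strict Implicit. Unset Printing Implicit Defensive.
Import GRing.Theory.
Local Open Scope ring_scope.

Definition zero_divisor (R : comPzRingType) (x : R) : Prop :=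
  exists y : R, y != 0 /\ x * y = 0.

Definition zdg_vertex (R : comPzRingType) (x : R) : Prop :=
  x != 0 /\ zero_divisor x.

(* adjacency in Gamma(R): distinct r,s adjacent iff rs = 0; x adjacent to
   itself iff x^2 = 0.  Both cases are r * s == 0. *)
Definition zdg_adj (R : comPzRingType) : rel R := fun r s => r * s == 0.

Definition total_dominating (R : comPzRingType) (X : seq R) : Prop :=
  (forall x, x \in X -> zdg_vertex x) /\
  (forall v, zdg_vertex v -> exists2 x, x \in X & zdg_adj v x).

(* gamma_t(Gamma(R)) >= n : every total dominating set has at least n
   elements (infinite ones trivially do, so only finite ones matter) *)
Definition gamma_t_ge (R : comPzRingType) (n : nat) : Prop :=
  forall X : seq R, uniq X -> total_dominating X -> (n <= size X)%N.

Definition zdg_cycle (R : comPzRingType) (s : seq R) : Prop :=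
  (3 <= size s)%N /\ uniq s /\ (forall x, x \in s -> zdg_vertex x) /\
  cycle (@zdg_adj R) s.

Definition girth_eq (R : comPzRingType) (g : nat) : Prop :=
  (exists s : seq R, zdg_cycle s /\ size s = g) /\
  (forall s : seq R, zdg_cycle s -> (g <= size s)%N).

(* Suppose Γ(R) has no triangle; we exhibit a total dominating set with at
   most two elements.  If some x ≠ 0 has x² = 0, then for every t with
   tx ≠ 0 the elements x and tx are square-zero and adjacent, so tx = ±x
   (otherwise x, tx, x + tx is a triangle); hence tx ≠ 0 forces
   ann(t) ⊆ ann(x).  Either x dominates every vertex, or some vertex v has
   vx ≠ 0 and a neighbour w, and then {x, w} dominates.  If R is reduced,
   adjacent vertices are automatically distinct, and any edge {a, b}
   dominates: a vertex u with ua ≠ 0 ≠ ub and neighbour w would produce one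
   of the triangles (b, wa, ua), (a, wb, ub) or (a, b, w). *)
From mathcomp Require Import all_boot all_order all_algebra.
From Stdlib Require Import Classical.
Set Implicit Arguments. Unset Strict Implicit. Unset Printing Implicit Defensive.
Import GRing.Theory.
Local Open Scope ring_scope.

Section ZeroDivisorGraph.
Variable R : comPzRingType.
Implicit Types a b c t u v w x y : R.

Lemma zdg_vertex_adj a b : a != 0 -> b != 0 -> a * b = 0 -> zdg_vertex a.
Proof. by move=> a0 b0 ab; split=> //; exists b. Qed.

Lemma zdg_cycle3 a b c :
  a != 0 -> b != 0 -> c != 0 -> [/\ a != b, b != c & c != a] ->
  [/\ a * b = 0, b * c = 0 & c * a = 0] -> zdg_cycle [:: a; b; c].
Proof.
move=> a0 b0 c0 [ab bc ca] [pab pbc pca]; split=> //; split.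
  by rewrite /= !inE negb_or ab bc eq_sym ca.
split; last by rewrite /= /zdg_adj pab pbc pca !eqxx.
move=> y; rewrite !inE => /or3P[] /eqP->.
- exact: zdg_vertex_adj pab.
- exact: zdg_vertex_adj pbc.
- exact: zdg_vertex_adj pca.
Qed.

Definition gamma_t_le (n : nat) : Prop :=
  exists X : seq R, [/\ uniq X, (size X <= n)%N & total_dominating X].

Lemma gamma_t_ge_le m n : gamma_t_ge R m -> gamma_t_le n -> (m <= n)%N.
Proof. by move=> ge [X [uX sX tdX]]; apply: leq_trans (ge X uX tdX) sX. Qed.

Lemma total_dominating1 x :
  zdg_vertex x -> (forall u, zdg_vertex u -> u * x = 0) ->
  total_dominating [:: x].
Proof.
move=> vx dom; split; first by move=> y; rewrite inE => /eqP->.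
by move=> u /dom ux; exists x; rewrite ?inE // /zdg_adj ux.
Qed.

Lemma total_dominating2 a b :
  zdg_vertex a -> zdg_vertex b ->
  (forall u, zdg_vertex u -> u * a = 0 \/ u * b = 0) ->
  total_dominating [:: a; b].
Proof.
move=> va vb dom; split; first by move=> y; rewrite !inE => /orP[] /eqP->.
move=> u /dom[ua | ub]; [exists a | exists b];
  by rewrite ?inE ?eqxx ?orbT // /zdg_adj ?ua ?ub.
Qed.

Section TriangleFree.
Hypothesis no_triangle : forall a b c : R, ~ zdg_cycle [:: a; b; c].

Section SquareZero.
Variable x : R.
Hypotheses (x0 : x != 0) (xx : x * x = 0).

Lemma sqr0_adj_pm y : y != 0 -> y * y = 0 -> x * y = 0 -> y = x \/ y = - x.
Proof.
move=> y0 yy xy; case: (eqVneq y x) => [|yNx]; first by left.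
case: (eqVneq y (- x)) => [|yNNx]; first by right.
exfalso; apply: (no_triangle (a := x) (b := y) (c := x + y)).
apply: zdg_cycle3 => //.
- by rewrite addrC addr_eq0.
- split; first by rewrite eq_sym.
  + by apply: contra_neq x0; rewrite -{1}[y]add0r => /addIr.
  + by apply: contra_neq y0; rewrite -{2}[x]addr0 => /addrI.
- by split=> //; rewrite ?mulrDr ?mulrDl ?yy ?xx ?addr0 ?add0r mulrC.
Qed.

Lemma mul_sqr0_pm t : t * x != 0 -> t * x = x \/ t * x = - x.
Proof.
move=> tx0; apply: sqr0_adj_pm => //.
- by rewrite mulrACA xx mulr0.
- by rewrite mulrCA xx mulr0.
Qed.

Lemma mul_sqr0_ann t s : t * x != 0 -> t * s = 0 -> s * x = 0.
Proof.
move=> tx0 ts; have stx : s * (t * x) = 0 by rewrite mulrCA mulrA ts mul0r.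
by case: (mul_sqr0_pm tx0) stx => -> //; rewrite mulrN => /eqP; rewrite oppr_eq0 => /eqP.
Qed.

Lemma sqr0_dominating v w : v * x != 0 -> w != 0 -> v * w = 0 ->
  forall u, zdg_vertex u -> u * x = 0 \/ u * w = 0.
Proof.
move=> vx0 w0 vw u [_ [z [z0 uz]]].
case: (eqVneq (u * x) 0) => [|ux0]; first by left.
case: (eqVneq (u * w) 0) => [|uw0]; first by right.
(* p := uw is adjacent to x and to z, and differs from ±x since vp = 0 ≠ vx. *)
exfalso; set p := u * w.
have wx : w * x = 0 := mul_sqr0_ann vx0 vw.
have zx : z * x = 0 := mul_sqr0_ann ux0 uz.
have px : x * p = 0 by rewrite /p mulrCA [x * w]mulrC wx mulr0.
have pz : p * z = 0 by rewrite mulrAC uz mul0r.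
have vp : v * p = 0 by rewrite mulrCA vw mulr0.
have pNx : p != x by apply: contraNneq vx0 => <-; rewrite vp.
have pNNx : p != - x by apply: contraNneq vx0; rewrite -oppr_eq0 -mulrN => <-; rewrite vp.
case: (eqVneq p z) => [pz_eq | pNz].
  have pp : p * p = 0 by rewrite {2}pz_eq.
  by case: (sqr0_adj_pm uw0 pp px) => /eqP; rewrite ?(negPf pNx) ?(negPf pNNx).
apply: (no_triangle (a := x) (b := p) (c := z)); apply: zdg_cycle3 => //.
by split=> //; [rewrite eq_sym | apply: contraNneq ux0 => <-; rewrite uz].
Qed.

Lemma sqr0_gamma_t_le2 : gamma_t_le 2.
Proof.
have vx : zdg_vertex x := zdg_vertex_adj x0 x0 xx.
case: (classic (exists v, zdg_vertex v /\ v * x != 0)) =>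
    [[v [[v0 [w [w0 vw]]] vx0]] | all_adj].
  have xNw : x != w by apply: contraNneq vx0 => ->; rewrite vw.
  exists [:: x; w]; split=> //; first by rewrite /= inE xNw.
  apply: total_dominating2 => //; last exact: sqr0_dominating vx0 w0 vw.
  by apply: zdg_vertex_adj w0 v0 _; rewrite mulrC.
exists [:: x]; split=> //; apply: total_dominating1 => // u vu.
by apply: NNPP => ux0; apply: all_adj; exists u; split=> //; apply/eqP.
Qed.

End SquareZero.

Section Reduced.
Hypothesis reduced : forall y : R, y * y = 0 -> y = 0.

Lemma reduced_adj_neq a b : a != 0 -> a * b = 0 -> a != b.
Proof.
by move=> a0 ab; apply: contra_neq a0 => ab_eq; apply: reduced; rewrite {2}ab_eq.
Qed.

Lemma reduced_cycle3 a b c : a != 0 -> b != 0 -> c != 0 ->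
  [/\ a * b = 0, b * c = 0 & c * a = 0] -> zdg_cycle [:: a; b; c].
Proof.
move=> a0 b0 c0 [ab bc ca]; apply: zdg_cycle3 => //.
by split; apply: reduced_adj_neq.
Qed.

Lemma reduced_dominating a b : a != 0 -> b != 0 -> a * b = 0 ->
  forall u, zdg_vertex u -> u * a = 0 \/ u * b = 0.
Proof.
move=> a0 b0 ab u [_ [w [w0 uw]]].
case: (eqVneq (u * a) 0) => [|ua0]; first by left.
case: (eqVneq (u * b) 0) => [|ub0]; first by right.
exfalso.
have triangle_at p q : q != 0 -> p * q = 0 -> u * p != 0 -> w * p != 0 -> False.
  move=> q0 pq up0 wp0; apply: (no_triangle (a := q) (b := w * p) (c := u * p)).
  apply: reduced_cycle3 => //; split.
  - by rewrite mulrCA [q * p]mulrC pq mulr0.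
  - by rewrite mulrACA [w * u]mulrC uw mul0r.
  - by rewrite -mulrA pq mulr0.
case: (eqVneq (w * a) 0) => [wa | wa0]; last exact: triangle_at b0 ab ua0 wa0.
case: (eqVneq (w * b) 0) => [wb | wb0].
  apply: (no_triangle (a := a) (b := b) (c := w)); apply: reduced_cycle3 => //.
  by split=> //; rewrite mulrC.
by apply: (triangle_at _ _ a0 _ ub0 wb0); rewrite mulrC.
Qed.

Lemma reduced_gamma_t_le2 : gamma_t_le 2.
Proof.
case: (classic (exists a, zdg_vertex a)) => [[a [a0 [b [b0 ab]]]] | no_vertex].
  exists [:: a; b]; split=> //; first by rewrite /= inE reduced_adj_neq.
  apply: total_dominating2; last exact: reduced_dominating.
  - exact: zdg_vertex_adj ab.
  - by apply: zdg_vertex_adj b0 a0 _; rewrite mulrC.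
by exists [::]; split=> //; split=> // v vv; case: no_vertex; exists v.
Qed.

End Reduced.

Lemma triangle_free_gamma_t_le2 : gamma_t_le 2.
Proof.
case: (classic (exists x : R, x != 0 /\ x * x = 0)) => [[x [x0 xx]] | reduced].
  exact: sqr0_gamma_t_le2 x0 xx.
apply: reduced_gamma_t_le2 => y yy; apply: NNPP => y0.
by apply: reduced; exists y; split=> //; apply/eqP.
Qed.

End TriangleFree.
End ZeroDivisorGraph.

Theorem proposition3p5 (R : comPzRingType) :
  gamma_t_ge R 3 -> girth_eq R 3.
Proof.
move=> gamma_ge3; split; last by move=> s [].
apply: NNPP => no_3cycle.
have no_triangle : forall a b c : R, ~ zdg_cycle [:: a; b; c].
  by move=> a b c abc; apply: no_3cycle; exists [:: a; b; c].
by have := gamma_t_ge_le gamma_ge3 (triangle_free_gamma_t_le2 no_triangle).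
Qed.
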